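(* Let $B \in \mathbb{R}^{r \times n}$ and $S \subseteq \mathbb{R}^n$, and let $\varphi_B \colon \mathbb{R}^n_+ \to \mathbb{R}^r_+$, $\varphi_B(x) = x^B$. The following are equivalent: (i) $\varphi_B$ is injective with respect to $S$; (ii) $\sigma(\ker(B)) \cap \sigma(S^* ) = \emptyset$.
   Context: $\mathbb{R}_+$ denotes the strictly positive reals. For $x\in\mathbb{R}^n_+$, $(x^B)_j=\prod_{i=1}^n x_i^{b_{ji}}$ (real exponents). A function $g$ on $\mathbb{R}^n_+$ is injective with respect to $S$ if $x,y\in\mathbb{R}^n_+$, $x\ne y$, $x-y\in S$ imply $g(x)\neq g(y)$. $S^*=S\setminus\{0\}$. $\sigma$ denotes the componentwise sign vector, and $\sigma(T)=\{\sigma(x)\mid x\in T\}$. *)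

From mathcomp Require Import ssreflect ssrfun ssrbool eqtype ssrnat seq fintype bigop.
From Stdlib Require Import Reals.
Open Scope R_scope.

Definition vec (n : nat) := 'I_n -> R.
Definition mat (r n : nat) := 'I_r -> 'I_n -> R.

Definition pos_vec {n} (x : vec n) : Prop := forall i, 0 < x i.

Definition phiB {r n} (B : mat r n) (x : vec n) : vec r :=
  fun j => \big[Rmult/1]_(i < n) Rpower (x i) (B j i).

Definition vsub {n} (x y : vec n) : vec n := fun i => x i - y i.
Definition vzero n : vec n := fun _ => 0.

Definition injective_wrt {n m} (g : vec n -> vec m) (S : vec n -> Prop) : Prop :=
  forall x y : vec n, pos_vec x -> pos_vec y -> x <> y -> S (vsub x y) -> g x <> g y.

Definition kerB {r n} (B : mat r n) (x : vec n) : Prop :=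
  forall j, \big[Rplus/0]_(i < n) (B j i * x i) = 0.

Definition Sstar {n} (S : vec n -> Prop) (x : vec n) : Prop := S x /\ x <> vzero n.

Definition sgnR (a : R) : Z :=
  match Rcase_abs a with
  | left _ => (-1)%Z
  | right _ => if Req_EM_T a 0 then 0%Z else 1%Z
  end.

Definition sigma {n} (x : vec n) : 'I_n -> Z := fun i => sgnR (x i).

Definition sigma_set {n} (T : vec n -> Prop) (s : 'I_n -> Z) : Prop :=
  exists x, T x /\ sigma x = s.

From Pilot Require Import Defs.
From mathcomp Require Import ssreflect ssrfun ssrbool eqtype ssrnat seq fintype bigop.
From Stdlib Require Import Reals Lra FunctionalExtensionality.
Open Scope R_scope.

(* Proof idea: pass to logarithmic coordinates.  For x in R^n_+ we have
   ln (x^B)_j = sum_i b_ji ln x_i, so x^B = y^B  iff  ln x - ln y lies in ker B.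
   Since ln is strictly increasing, ln x - ln y has the same sign vector as
   x - y.  Hence a failure of injectivity (x <> y, x - y in S, x^B = y^B)
   yields the common sign vector of ln x - ln y in ker B and of x - y in S^*.
   Conversely, every pair (k, z) of reals with the same sign is realised as
   k = ln x - ln y, z = x - y for some x, y > 0 (take y = z / (e^k - 1),
   x = y e^k when z <> 0, and x = y = 1 otherwise); applied componentwise to
   k in ker B and z in S^* with equal sign vectors this produces a
   non-injective pair. *)

Lemma big_Rminus n (F G : 'I_n -> R) :
  \big[Rplus/0]_(i < n) (F i - G i) =
  \big[Rplus/0]_(i < n) F i - \big[Rplus/0]_(i < n) G i.
Proof.
apply: (big_ind3 (fun a b c => a = b - c)); first lra; last by [].
by move=> ? ? ? ? ? ? -> ->; lra.
Qed.

Lemma ln_phiB r n (B : mat r n) (x : vec n) (j : 'I_r) : pos_vec x ->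
  0 < phiB B x j /\ ln (phiB B x j) = \big[Rplus/0]_(i < n) (B j i * ln (x i)).
Proof.
move=> px; apply: (big_ind2 (fun a b => 0 < a /\ ln a = b)).
- by split; [lra | exact: ln_1].
- move=> a b c d [a_gt0 <-] [c_gt0 <-]; split; first exact: Rmult_lt_0_compat.
  by rewrite ln_mult.
- by move=> i _; rewrite /Rpower; split; [exact: exp_pos | rewrite ln_exp].
Qed.
Arguments ln_phiB {r n}.

Lemma phiB_eq_iff_ker r n (B : mat r n) (x y : vec n) :
  pos_vec x -> pos_vec y ->
  phiB B x = phiB B y <-> kerB B (fun i => ln (x i) - ln (y i)).
Proof.
move=> px py.
have log_diff j : ln (phiB B x j) - ln (phiB B y j) =
    \big[Rplus/0]_(i < n) (B j i * (ln (x i) - ln (y i))).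
  rewrite (proj2 (ln_phiB B x j px)) (proj2 (ln_phiB B y j py)) -big_Rminus.
  by apply: eq_bigr => i _; ring.
split=> [eq_phi j | ker].
- by rewrite -log_diff eq_phi; ring.
- apply: functional_extensionality => j.
  apply: ln_inv; [exact: (proj1 (ln_phiB B x j px)) |
                  exact: (proj1 (ln_phiB B y j py)) | ].
  by have := log_diff j; rewrite ker; lra.
Qed.

Lemma sgnR_neg a : a < 0 -> sgnR a = (-1)%Z.
Proof. by move=> a_lt0; rewrite /sgnR; case: Rcase_abs => // a_ge0; lra. Qed.

Lemma sgnR_zero a : a = 0 -> sgnR a = 0%Z.
Proof.
move=> a_eq0; rewrite /sgnR; case: Rcase_abs => [a_lt0 | _]; first lra.
by case: Req_EM_T.
Qed.

Lemma sgnR_pos a : 0 < a -> sgnR a = 1%Z.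
Proof.
move=> a_gt0; rewrite /sgnR; case: Rcase_abs => [a_lt0 | _]; first lra.
by case: Req_EM_T => // a_eq0; lra.
Qed.

Lemma sgnR_eq_cases a b : sgnR a = sgnR b ->
  (a < 0 /\ b < 0) \/ (a = 0 /\ b = 0) \/ (0 < a /\ 0 < b).
Proof.
move=> E; case: (Rtotal_order a 0) => [|[]] Ha;
  case: (Rtotal_order b 0) => [|[]] Hb;
  rewrite ?(sgnR_neg _ Ha) ?(sgnR_zero _ Ha) ?(sgnR_pos _ Ha)
          ?(sgnR_neg _ Hb) ?(sgnR_zero _ Hb) ?(sgnR_pos _ Hb) in E;
  by [ | left | right; left | right; right].
Qed.

(* ln is strictly increasing, so it preserves the sign of differences. *)
Lemma sgnR_ln_diff a b : 0 < a -> 0 < b -> sgnR (ln a - ln b) = sgnR (a - b).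
Proof.
move=> a_gt0 b_gt0; case: (Rtotal_order a b) => [|[]] ab.
- have lab := ln_increasing a b a_gt0 ab.
  by rewrite !sgnR_neg //; lra.
- by rewrite ab !sgnR_zero //; ring.
- have lab := ln_increasing b a b_gt0 ab.
  by rewrite !sgnR_pos //; lra.
Qed.

(* One-dimensional realisation: for k, z of the same sign, y = realize_base k z
   is positive and the pair (y e^k, y) has log-difference k and difference z. *)
Definition realize_base (k z : R) : R :=
  if Req_EM_T z 0 then 1 else z / (exp k - 1).

Lemma realize_base_spec k z : sgnR k = sgnR z ->
  0 < realize_base k z /\ realize_base k z * exp k - realize_base k z = z.
Proof.
rewrite /realize_base => /sgnR_eq_cases [[k_lt0 z_lt0]|[[-> ->]|[k_gt0 z_gt0]]].
- have ek : exp k < 1 by rewrite -exp_0; apply: exp_increasing.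
  case: (Req_EM_T z 0) => [z_eq0 | z_neq0] /=; first lra.
  split; last by field; lra.
  have -> : z / (exp k - 1) = - z / (1 - exp k) by field; lra.
  apply: Rdiv_lt_0_compat; lra.
- by case: (Req_EM_T 0 0) => //= _; rewrite exp_0; lra.
- have ek : 1 < exp k by rewrite -exp_0; apply: exp_increasing.
  case: (Req_EM_T z 0) => [z_eq0 | z_neq0] /=; first lra.
  by split; [apply: Rdiv_lt_0_compat; lra | field; lra].
Qed.

Lemma sign_realization {n} (k z : vec n) : Defs.sigma k = Defs.sigma z ->
  exists x y : vec n, [/\ pos_vec x, pos_vec y, vsub x y = z &
                          (fun i => ln (x i) - ln (y i)) = k].
Proof.
move=> sgn_kz; pose y : vec n := fun i => realize_base (k i) (z i).
have spec i := realize_base_spec (k i) (z i) (f_equal (fun s => s i) sgn_kz).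
have py : pos_vec y by move=> i; exact: (proj1 (spec i)).
exists (fun i => y i * exp (k i)), y; split => //.
- by move=> i; apply: Rmult_lt_0_compat; [exact: py | exact: exp_pos].
- by apply: functional_extensionality => i; exact: (proj2 (spec i)).
- apply: functional_extensionality => i.
  by rewrite ln_mult ?ln_exp; [ring | exact: py | exact: exp_pos].
Qed.

Lemma vsub_eq0 n (x y : vec n) : vsub x y = vzero n <-> x = y.
Proof.
split=> [E | ->]; apply: functional_extensionality => i; last first.
  by rewrite /vsub /vzero; ring.
by have := f_equal (fun f => f i) E; rewrite /vsub /vzero; lra.
Qed.

Theorem mainTheorem7 (r n : nat) (B : mat r n) (S : vec n -> Prop) :
  injective_wrt (phiB B) S <->
  (forall s : 'I_n -> Z, ~ (sigma_set (kerB B) s /\ sigma_set (Sstar S) s)).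
Proof.
split.
- move=> inj s [[k [ker_k <-]] [z [[Sz z_neq0] sgn_zk]]].
  have [x [y [px py xy_z log_k]]] := sign_realization k z (esym sgn_zk).
  apply: (inj x y px py); rewrite ?xy_z //.
  + by move=> xy; apply: z_neq0; rewrite -xy_z; exact/vsub_eq0.
  + by apply/phiB_eq_iff_ker => //; rewrite log_k.
- move=> no_common x y px py x_neq_y S_xy eq_phi.
  apply: (no_common (Defs.sigma (vsub x y))); split.
  + exists (fun i => ln (x i) - ln (y i)); split; first exact/phiB_eq_iff_ker.
    by apply: functional_extensionality => i; exact: sgnR_ln_diff.
  + by exists (vsub x y); split; [split=> // /vsub_eq0 | ].
Qed.
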